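(* Let $w$ be a good word with word polynomial $p_w$ and let $z\in\mathbb{C}\setminus\{0\}$ be such that $\Gamma_z$ is discrete. Then $\Gamma_{p_w(z)}$ is also discrete.
   Context: $\Gamma_z=\langle \pm\begin{pmatrix}1&1\\0&1\end{pmatrix},\pm\begin{pmatrix}1&0\\ z&1\end{pmatrix}\rangle\subset PSL(2,\mathbb{C})$. For $x,y\in PSL(2,\mathbb{C})$, $\gamma(x,y)=\operatorname{tr}[x,y]-2$. A good word is a reduced word $w=a^{m_1}ba^{m_2}b\cdots ba^{m_n}$ in $\langle a,b\mid b^2=1\rangle$ with $n\ge3$ and $m_i\ne0$ for $2\le i\le n-1$; its word polynomial $p_w\in\mathbb{Z}[z]$ is the unique polynomial such that for every parabolic $f$ and every order-two elliptic $\phi$ in $PSL(2,\mathbb{C})$, $\gamma(f,w(f,\phi))=p_w(\gamma(f,\phi))$, where $w(f,\phi)$ substitutes $a=f$, $b=\phi$. *)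

From mathcomp Require Import all_boot all_order all_algebra.
From mathcomp Require Import reals.
From mathcomp.real_closed Require Import complex.
Set Implicit Arguments. Unset Strict Implicit. Unset Printing Implicit Defensive.
Import Order.TTheory GRing.Theory Num.Theory.
Local Open Scope ring_scope.

Section Defs.
Variable R : realType.
Local Notation C := R[i].

Definition mx2 (a b c d : C) : 'M[C]_2 :=
  \matrix_(i < 2, j < 2)
    if (i : nat) == 0%N then (if (j : nat) == 0%N then a else b)
    else (if (j : nat) == 0%N then c else d).

Definition gamma (x y : 'M[C]_2) : C :=
  \tr (x *m y *m invmx x *m invmx y) - 2.

(* Elements of SL(2,C) representing parabolic elements of PSL(2,C). *)
Definition parabolic (f : 'M[C]_2) : Prop :=
  \det f = 1 /\ (\tr f = 2 \/ \tr f = - 2) /\ f <> 1 /\ f <> - 1.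

(* Elements of SL(2,C) representing elements of order two in PSL(2,C)
   (these are exactly the order-two elliptic elements). *)
Definition order_two_elliptic (phi : 'M[C]_2) : Prop :=
  \det phi = 1 /\ (phi * phi = 1 \/ phi * phi = - 1) /\ phi <> 1 /\ phi <> - 1.

(* A word a^{m_1} b a^{m_2} b ... b a^{m_n} is encoded by its exponent list
   [:: m_1; ...; m_n].  Evaluation at a = f, b = phi. *)
Fixpoint word_eval (f phi : 'M[C]_2) (ms : seq int) : 'M[C]_2 :=
  match ms with
  | [::] => 1
  | [:: m] => f ^ m
  | m :: ms' => f ^ m * phi * word_eval f phi ms'
  end.

(* Good word: n >= 3 and m_i <> 0 for 2 <= i <= n-1 (1-based). *)
Definition good_word (ms : seq int) : Prop :=
  (3 <= size ms)%N /\
  (forall i : nat, (0 < i)%N -> (i < (size ms).-1)%N -> nth 0 ms i <> 0).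

Definition is_word_poly (ms : seq int) (p : {poly C}) : Prop :=
  forall f phi : 'M[C]_2, parabolic f -> order_two_elliptic phi ->
    gamma f (word_eval f phi ms) = p.[gamma f phi].

(* Preimage in SL(2,C) of Gamma_z = < ±(1 1;0 1), ±(1 0;z 1) >. *)
Inductive in_Gamma (z : C) : 'M[C]_2 -> Prop :=
  | Gamma_one : in_Gamma z 1
  | Gamma_negone : in_Gamma z (- 1)
  | Gamma_A : in_Gamma z (mx2 1 1 0 1)
  | Gamma_B : in_Gamma z (mx2 1 0 z 1)
  | Gamma_inv g : in_Gamma z g -> in_Gamma z (invmx g)
  | Gamma_mul g h : in_Gamma z g -> in_Gamma z h -> in_Gamma z (g * h).

(* Gamma_z is discrete in PSL(2,C): every element ±g is isolated for the
   quotient metric d(±g, ±h) = min(|g - h|, |g + h|) (entrywise max-norm). *)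
Definition discrete_Gamma (z : C) : Prop :=
  forall g, in_Gamma z g ->
    exists eps : R, 0 < eps /\
      forall h, in_Gamma z h -> h <> g -> h <> - g ->
        (exists i j, ((eps%:C)%C <= `|h i j - g i j|)) /\
        (exists i j, ((eps%:C)%C <= `|h i j + g i j|)).
End Defs.

(* Let c^2 = z.  The order-two elliptic element Phi = (0, -1/c; c, 0) satisfies
   gamma(A, Phi) = c^2 = z and swaps A = (1 1; 0 1) and (1 0; -z 1) under
   conjugation, so it normalizes Gamma_(-z); hence so does g = w(A, Phi), and
   p_w(z) = gamma(A, g) = g21^2.  If g21 <> 0, conjugating g A g^-1 by
   diag(1, -1) and then by a translation turns it into (1 0; g21^2 1), so a
   conjugate of Gamma_(p_w(z)) lies in Gamma_z (if g21 = 0 this is trivial).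
   Conjugation by a fixed matrix changes the size of matrix entries by at most
   a constant factor, so this conjugate, and hence Gamma_(p_w(z)), inherits
   discreteness from Gamma_z. *)

From mathcomp Require Import all_boot all_order all_algebra.
From mathcomp Require Import reals.
From mathcomp.real_closed Require Import complex.
From mathcomp Require Import ring lra.
Set Implicit Arguments. Unset Strict Implicit. Unset Printing Implicit Defensive.
Import Order.TTheory GRing.Theory Num.Theory ComplexField.Normc.
Local Open Scope ring_scope.

Section EntryNorm.
Variable R : realType.
Local Notation C := R[i].

Lemma normcE (x : C) : `|x| = ((normc x)%:C)%C.
Proof. by case: x. Qed.

Lemma normc_ge0 (x : C) : 0 <= normc x.
Proof. by case: x => a b; apply: sqrtr_ge0. Qed.

Lemma normc_sum (I : Type) (r : seq I) (P : pred I) (F : I -> C) :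
  normc (\sum_(i <- r | P i) F i) <= \sum_(i <- r | P i) normc (F i).
Proof.
have := ler_norm_sum r F P.
by rewrite normcE (eq_bigr _ (fun i _ => normcE (F i))) -rmorph_sum lecR.
Qed.

Definition mx_l1 m n (A : 'M[C]_(m, n)) : R := \sum_i \sum_j normc (A i j).

Lemma mx_l1_ge0 m n (A : 'M[C]_(m, n)) : 0 <= mx_l1 A.
Proof. by apply: sumr_ge0 => i _; apply: sumr_ge0 => j _; apply: normc_ge0. Qed.

Lemma row_l1_le_mx_l1 m n (A : 'M[C]_(m, n)) i :
  \sum_j normc (A i j) <= mx_l1 A.
Proof.
rewrite /mx_l1 (bigD1 i) //= lerDl.
by apply: sumr_ge0 => k _; apply: sumr_ge0 => j _; apply: normc_ge0.
Qed.

Lemma normc_le_mx_l1 m n (A : 'M[C]_(m, n)) i j : normc (A i j) <= mx_l1 A.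
Proof.
apply: le_trans (row_l1_le_mx_l1 A i).
rewrite (bigD1 j) //= lerDl.
by apply: sumr_ge0 => k _; apply: normc_ge0.
Qed.

Lemma mx_l1_mulmx m n p (A : 'M[C]_(m, n)) (B : 'M[C]_(n, p)) :
  mx_l1 (A *m B) <= mx_l1 A * mx_l1 B.
Proof.
rewrite /mx_l1 mulr_suml; apply: ler_sum => i _.
apply: le_trans (_ : \sum_j \sum_k normc (A i k) * normc (B k j) <= _).
  apply: ler_sum => j _; rewrite mxE; apply: le_trans (normc_sum _ _ _) _.
  by apply: ler_sum => k _; rewrite normcM.
rewrite exchange_big mulr_suml; apply: ler_sum => k _.
by rewrite -mulr_sumr ler_wpM2l ?normc_ge0 ?row_l1_le_mx_l1.
Qed.

Lemma mx_l1_le_const m n (A : 'M[C]_(m, n)) (d : R) :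
  (forall i j, normc (A i j) <= d) -> mx_l1 A <= d *+ (n * m).
Proof.
move=> le_d; rewrite mulrnA -[m in d *+ _ *+ m]card_ord -sumr_const.
apply: ler_sum => i _; rewrite -[n in d *+ n]card_ord -sumr_const.
by apply: ler_sum => j _.
Qed.

Definition entry_apart m n (eps : R) (A : 'M[C]_(m, n)) : Prop :=
  exists i j, eps <= normc (A i j).

Lemma entry_apart_mulmx n (M N : 'M[C]_n) (eps : R) : 0 < eps ->
  exists2 delta : R, 0 < delta &
    forall X, entry_apart eps (M *m X *m N) -> entry_apart delta X.
Proof.
move=> eps_gt0; set a := mx_l1 M * mx_l1 N * (n * n)%:R.
have a_ge0 : 0 <= a by rewrite !mulr_ge0 ?mx_l1_ge0.
have K_gt0 : 0 < 1 + a by rewrite ltr_wpDr.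
exists (eps / (1 + a)); first exact: divr_gt0.
move=> X [i [j apart_ij]].
have [/existsP [k /existsP [l ?]] | /existsPn small] :=
  boolP [exists k, exists l, eps / (1 + a) <= normc (X k l)]; first by exists k, l.
set delta := eps / (1 + a).
have le_X : mx_l1 X <= delta * (n * n)%:R.
  rewrite mulr_natr; apply: mx_l1_le_const => k l.
  by have /existsPn/(_ l) := small k; rewrite -ltNge => /ltW.
have : eps <= delta * a.
  apply: le_trans apart_ij (le_trans (normc_le_mx_l1 _ i j) _).
  apply: le_trans (mx_l1_mulmx _ _) _.
  apply: le_trans (ler_wpM2r (mx_l1_ge0 N) (mx_l1_mulmx M X)) _.
  have -> : delta * a = mx_l1 M * (delta * (n * n)%:R) * mx_l1 N by rewrite /a; ring.
  by rewrite ler_wpM2r ?ler_wpM2l ?mx_l1_ge0.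
have : delta * (1 + a) = eps by rewrite divfK ?gt_eqF.
have : 0 < delta by exact: divr_gt0.
nra.
Qed.

Definition psl_discrete n (S : 'M[C]_n -> Prop) : Prop :=
  forall g, S g -> exists2 eps : R, 0 < eps &
    forall h, S h -> h <> g -> h <> - g ->
      entry_apart eps (h - g) /\ entry_apart eps (h + g).

Lemma psl_discrete_conj n (S T : 'M[C]_n -> Prop) (M N : 'M[C]_n) :
  M *m N = 1%:M -> (forall h, S h -> T (M *m h *m N)) ->
  psl_discrete T -> psl_discrete S.
Proof.
move=> /mulmx1C NM ST discT g Sg.
have [eps eps_gt0 sepT] := discT _ (ST _ Sg).
have [delta delta_gt0 apart_conj] := entry_apart_mulmx M N eps_gt0.
have conjK X : N *m (M *m X *m N) *m M = X.
  by rewrite !mulmxA NM mul1mx -mulmxA NM mulmx1.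
exists delta => // h Sh hNg hNNg.
have neq_g : M *m h *m N <> M *m g *m N.
  by move/(congr1 (fun Y => N *m Y *m M)); rewrite !conjK.
have neq_Ng : M *m h *m N <> - (M *m g *m N).
  by rewrite -mulNmx -mulmxN => /(congr1 (fun Y => N *m Y *m M)); rewrite !conjK.
have [apartB apartD] := sepT _ (ST _ Sh) neq_g neq_Ng.
split; apply: apart_conj.
- by rewrite mulmxBr mulmxBl.
- by rewrite mulmxDr mulmxDl.
Qed.

End EntryNorm.

Section Gamma.
Variable R : realType.
Local Notation C := R[i].
Local Notation M2 := 'M[C]_2.
Local Notation T t := (mx2 1 t 0 1).
Local Notation L z := (mx2 1 0 z 1).
Local Notation A := (mx2 1 1 0 1 : M2).

Lemma mx2_eta (X : M2) : X = mx2 (X 0 0) (X 0 1) (X 1 0) (X 1 1).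
Proof.
apply/matrixP => i j; rewrite mxE.
by case: i => [[|[|]]] //= ?; case: j => [[|[|]]] //= ?; congr (X _ _); apply/val_inj.
Qed.

Lemma mul_mx2 (a b c d a' b' c' d' : C) :
  mx2 a b c d * mx2 a' b' c' d' =
  mx2 (a * a' + b * c') (a * b' + b * d') (c * a' + d * c') (c * b' + d * d').
Proof.
apply/matrixP => i j; rewrite -mulmxE !mxE !big_ord_recl big_ord0 !mxE /=.
by case: i => [[|[|]]] //= ?; case: j => [[|[|]]] //= ?; rewrite addr0.
Qed.

Lemma mx2_one : (1 : M2) = mx2 1 0 0 1.
Proof.
apply/matrixP => i j; rewrite !mxE.
by case: i => [[|[|]]] //= ?; case: j => [[|[|]]] //= ?.
Qed.

Lemma opp_mx2 (a b c d : C) : - mx2 a b c d = mx2 (- a) (- b) (- c) (- d).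
Proof.
apply/matrixP => i j; rewrite !mxE.
by case: i => [[|[|]]] //= ?; case: j => [[|[|]]] //= ?.
Qed.

Lemma det_mx2 (a b c d : C) : \det (mx2 a b c d) = a * d - b * c.
Proof.
rewrite (expand_det_row _ 0) !big_ord_recl big_ord0 /cofactor !mxE /=.
by rewrite !det_mx11 !mxE /= expr0 expr1; ring.
Qed.

Lemma trace_mx2 (a b c d : C) : \tr (mx2 a b c d) = a + d.
Proof. by rewrite /mxtrace !big_ord_recl big_ord0 !mxE /= addr0. Qed.

Lemma invmx_eq (X Y : M2) : X * Y = 1 -> invmx X = Y.
Proof.
move=> XY; have [X_unit _] := mulmx1_unit XY.
by rewrite -[invmx X]mulr1 -XY mulKr.
Qed.

Lemma invmx_mx2 (a b c d : C) : a * d - b * c = 1 ->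
  invmx (mx2 a b c d) = mx2 d (- b) (- c) a.
Proof.
by move=> det1; apply: invmx_eq; rewrite mul_mx2 mx2_one -det1; congr mx2; ring.
Qed.

Lemma mul_TN_T (t : C) : T (- t) * T t = 1.
Proof. by rewrite mul_mx2 mx2_one; congr mx2; ring. Qed.

Lemma Gamma_det (z : C) (g : M2) : in_Gamma z g -> \det g = 1.
Proof.
elim=> {g} [||||g _ detg|g h _ detg _ deth].
- exact: det1.
- by rewrite -scaleN1r detZ det1 mulr1 sqrrN expr1n.
- by rewrite det_mx2; ring.
- by rewrite det_mx2; ring.
- by rewrite det_inv detg invr1.
- by rewrite -mulmxE det_mulmx detg deth mulr1.
Qed.

Lemma det1_unitmx (g : M2) : \det g = 1 -> g \in unitmx.
Proof. by move=> detg; rewrite unitmxE detg unitr1. Qed.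

Lemma Gamma_exprz (z : C) (g : M2) (m : int) : in_Gamma z g -> in_Gamma z (g ^ m).
Proof.
move=> Gg; have Gexp n : in_Gamma z (g ^+ n).
  by elim: n => [|n IHn]; [exact: Gamma_one | rewrite exprS; exact: Gamma_mul].
case: m => n; first exact: Gexp.
by rewrite NegzE -invr_expz; apply/Gamma_inv/Gexp.
Qed.

Lemma Gamma_conj_sub (y w : C) (M N : M2) : M * N = 1 ->
  in_Gamma w (M * A * N) -> in_Gamma w (M * L y * N) ->
  forall h, in_Gamma y h -> in_Gamma w (M * h * N).
Proof.
move=> MN GA GL h; have NM : N * M = 1 by apply: mulmx1C.
elim: h / => [||||g Gg IHg|g k _ IHg _ IHk] //.
- by rewrite mulr1 MN; exact: Gamma_one.
- by rewrite mulrN1 mulNr MN; exact: Gamma_negone.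
- suff -> : M * invmx g * N = invmx (M * g * N) by exact: Gamma_inv.
  apply/esym/invmx_eq.
  rewrite -!mulrA (mulrA N) NM mul1r (mulrA g) -[invmx g]/(g^-1) mulrV ?mul1r //.
  exact/det1_unitmx/(Gamma_det Gg).
- suff -> : M * (g * k) * N = (M * g * N) * (M * k * N) by exact: Gamma_mul.
  by rewrite -!mulrA (mulrA N) NM mul1r.
Qed.

Lemma discrete_GammaP (z : C) : discrete_Gamma z <-> psl_discrete (in_Gamma z).
Proof.
split=> disc g Gg.
- have [eps [eps_gt0 sep]] := disc g Gg; exists eps => // h Gh hNg hNNg.
  have [[i [j apartB]] [k [l apartD]]] := sep h Gh hNg hNNg.
  rewrite normcE lecR in apartB; rewrite normcE lecR in apartD.
  by split; [exists i, j | exists k, l]; rewrite !mxE.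
- have [eps eps_gt0 sep] := disc g Gg; exists eps; split => // h Gh hNg hNNg.
  have [[i [j apartB]] [k [l apartD]]] := sep h Gh hNg hNNg.
  rewrite !mxE in apartB apartD.
  by split; [exists i, j | exists k, l]; rewrite normcE lecR.
Qed.

Lemma gamma_A (g : M2) : \det g = 1 -> gamma A g = g 1 0 ^+ 2.
Proof.
rewrite /gamma (mx2_eta g) det_mx2 !mxE /= => det1.
rewrite (invmx_mx2 det1) invmx_mx2; last by ring.
rewrite !mulmxE !mul_mx2 trace_mx2.
have -> : (2 : C) = 2 * (g 0 0 * g 1 1 - g 0 1 * g 1 0) by rewrite det1 mulr1.
ring.
Qed.

Lemma A_parabolic : parabolic A.
Proof.
split; first by rewrite det_mx2; ring.
split; first by left; rewrite trace_mx2.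
split=> /(congr1 (fun X : M2 => X 0 1)); rewrite ?opp_mx2 mx2_one !mxE /=.
- by move/eqP; rewrite oner_eq0.
- by rewrite oppr0 => /eqP; rewrite oner_eq0.
Qed.

Definition normalizes_Gamma (v : C) (g : M2) : Prop :=
  \det g = 1 /\ forall h, in_Gamma v h -> in_Gamma v (g * h * invmx g).

Lemma Gamma_normalizes (v : C) (g : M2) : in_Gamma v g -> normalizes_Gamma v g.
Proof.
move=> Gg; split=> [|h Gh]; first exact: Gamma_det Gg.
by apply: Gamma_mul; [apply: Gamma_mul | apply: Gamma_inv].
Qed.

Lemma normalizes_Gamma_mul (v : C) (g k : M2) :
  normalizes_Gamma v g -> normalizes_Gamma v k -> normalizes_Gamma v (g * k).
Proof.
move=> [detg Ng] [detk Nk]; split=> [|h Gh].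
  by rewrite -mulmxE det_mulmx detg detk mulr1.
have -> : invmx (g * k) = invmx k * invmx g.
  by rewrite -[invmx _]/((g * k)^-1) invrM // det1_unitmx.
have -> : g * k * h * (invmx k * invmx g) = g * (k * h * invmx k) * invmx g.
  by rewrite !mulrA.
exact/Ng/Nk.
Qed.

Lemma normalizes_Gamma_word (v : C) (f phi : M2) (ms : seq int) :
  in_Gamma v f -> normalizes_Gamma v phi -> normalizes_Gamma v (word_eval f phi ms).
Proof.
move=> Gf Nphi; elim: ms => [|m [|m' ms] IHms] /=.
- exact/Gamma_normalizes/Gamma_one.
- exact/Gamma_normalizes/Gamma_exprz.
- apply: normalizes_Gamma_mul IHms; apply: normalizes_Gamma_mul Nphi.
  exact/Gamma_normalizes/Gamma_exprz.
Qed.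

Local Notation Phi c := (mx2 0 (- c^-1) c%R 0).

Lemma det_Phi (c : C) : c != 0 -> \det (Phi c) = 1.
Proof. by move=> c_neq0; rewrite det_mx2; field. Qed.

Lemma gamma_A_Phi (c : C) : c != 0 -> gamma A (Phi c) = c ^+ 2.
Proof. by move=> c_neq0; rewrite gamma_A ?det_Phi // mxE. Qed.

Lemma Phi_order_two_elliptic (c : C) : c != 0 -> order_two_elliptic (Phi c).
Proof.
move=> c_neq0; split; first exact: det_Phi.
split; first by right; rewrite mul_mx2 mx2_one opp_mx2; congr mx2; field.
split=> /(congr1 (fun X : M2 => X 1 0)); rewrite ?opp_mx2 mx2_one !mxE /= ?oppr0;
  exact/eqP.
Qed.

Lemma Phi_normalizes (c : C) : c != 0 -> normalizes_Gamma (- c ^+ 2) (Phi c).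
Proof.
move=> c_neq0; split=> [|h]; first exact: det_Phi.
rewrite invmx_mx2 -?det_mx2 ?det_Phi // opprK; apply: Gamma_conj_sub.
- by rewrite mul_mx2 mx2_one; congr mx2; field.
- have -> : Phi c * A * mx2 0 c^-1 (- c) 0 = L (- c ^+ 2).
    by rewrite !mul_mx2; congr mx2; field.
  exact: Gamma_B.
- have -> : Phi c * L (- c ^+ 2) * mx2 0 c^-1 (- c) 0 = A.
    by rewrite !mul_mx2; congr mx2; field.
  exact: Gamma_A.
Qed.

Local Notation D := (mx2 1 0 0 (-1) : M2).

Lemma Gamma_D_conj (z : C) (h : M2) : in_Gamma (- z) h -> in_Gamma z (D * h * D).
Proof.
move: h; apply: Gamma_conj_sub.
- by rewrite mul_mx2 mx2_one; congr mx2; ring.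
- have -> : D * A * D = invmx A by rewrite invmx_mx2 ?mul_mx2; [congr mx2 | ]; ring.
  exact/Gamma_inv/Gamma_A.
- have -> : D * L (- z) * D = L z by rewrite !mul_mx2; congr mx2; ring.
  exact: Gamma_B.
Qed.

Lemma T_conj_L_sqr (a b c d : C) : a * d - b * c = 1 -> c != 0 ->
  T (- (a / c)) * L (c ^+ 2) * T (a / c) =
  D * (mx2 a b c d * A * invmx (mx2 a b c d)) * D.
Proof.
move=> det1 c_neq0; rewrite (invmx_mx2 det1) !mul_mx2.
(* Eliminating b turns the identity into one of rational functions in a, c, d. *)
have -> : b = (a * d - 1) / c by apply: (mulIf c_neq0); rewrite divfK // -det1; ring.
by congr mx2; field.
Qed.

Lemma Gamma_sqr_translate_sub (z : C) (g : M2) :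
  \det g = 1 -> in_Gamma (- z) (g * A * invmx g) ->
  exists t, forall h, in_Gamma (g 1 0 ^+ 2) h -> in_Gamma z (T (- t) * h * T t).
Proof.
move=> detg GgAg; exists (g 0 0 / g 1 0); apply: Gamma_conj_sub.
- exact: mul_TN_T.
- have -> : forall t, T (- t) * A * T t = A.
    by move=> t; rewrite !mul_mx2; congr mx2; ring.
  exact: Gamma_A.
- have [->|c_neq0] := eqVneq (g 1 0) 0.
    by rewrite expr0n /= -mx2_one mulr1 mul_TN_T; exact: Gamma_one.
  have det1 : g 0 0 * g 1 1 - g 0 1 * g 1 0 = 1 by rewrite -det_mx2 -mx2_eta.
  by rewrite (T_conj_L_sqr det1 c_neq0) -mx2_eta; apply: Gamma_D_conj.
Qed.
End Gamma.

Theorem corollary1 (R : realType) (ms : seq int) (p : {poly R[i]}) (z : R[i]) :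
  good_word ms -> is_word_poly ms p -> z != 0 ->
  discrete_Gamma z -> discrete_Gamma p.[z].
Proof.
move=> _ word_poly z_neq0 disc_z.
pose c := sqrtc z; have c2 : c ^+ 2 = z := sqr_sqrtc z.
have c_neq0 : c != 0 by apply: contra z_neq0 => /eqP c0; rewrite -c2 c0 expr0n.
pose g := word_eval (mx2 1 1 0 1) (mx2 0 (- c^-1) c 0) ms.
have [detg Ng] : normalizes_Gamma (- z) g.
  by apply: normalizes_Gamma_word; [exact: Gamma_A | rewrite -c2; exact: Phi_normalizes].
have pz : p.[z] = g 1 0 ^+ 2.
  rewrite -(gamma_A detg) word_poly ?gamma_A_Phi ?c2 //.
  - exact: A_parabolic.
  - exact: Phi_order_two_elliptic.
have [t Gconj] := Gamma_sqr_translate_sub detg (Ng _ (Gamma_A _)).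
rewrite pz; apply/discrete_GammaP; move/discrete_GammaP: disc_z.
by apply: psl_discrete_conj (mul_TN_T t) _ => h /Gconj; rewrite !mulmxE.
Qed.
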